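(* Let $s=\sigma+it$ with $-1/2\le\sigma<0$ and $t\ge 1$. Then there is a complex number $E(\sigma,t)$ with $$|E(\sigma,t)|\le\frac{\pi}{4}+\frac{1-2\sigma}{2}+\frac{18\sigma^2-18\sigma+19}{12t}$$ such that $$\pi^{s-1/2}\frac{\Gamma\left(\frac{1-s}{2}\right)}{\Gamma\left(\frac s2\right)}=\left(\frac{(1-\sigma)^2+t^2}{4}\right)^{-\sigma/4}\left(\frac{\sigma^2+t^2}{4}\right)^{(1-\sigma)/4}\pi^{\sigma-\frac12}\exp\Big(\sigma-\tfrac12+it\left(-\log t+\log(2\pi)+1\right)+E(\sigma,t)\Big).$$ *)

From Stdlib Require Import Reals Factorial ClassicalEpsilon.
From Coquelicot Require Import Coquelicot.
Open Scope R_scope.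

Definition Cexp (z : C) : C :=
  (exp (Re z) * cos (Im z), exp (Re z) * sin (Im z)).

Fixpoint rising_prod (z : C) (n : nat) : C :=
  match n with
  | O => z
  | S m => Cmult (rising_prod z m) (Cplus z (RtoC (INR (S m))))
  end.

Definition gauss_seq (z : C) (n : nat) : C :=
  Cdiv (Cmult (Cexp (Cmult z (RtoC (ln (INR n))))) (RtoC (INR (Factorial.fact n))))
       (rising_prod z n).

(** g is the value of the Gamma function at z (Gauss's limit formula,
    valid for every z not in {0,-1,-2,...}). *)
Definition is_Gamma (z g : C) : Prop :=
  filterlim (gauss_seq z) eventually (locally g).

(** The complex Gamma function (defined off the poles, where the limit exists). *)
Definition CGamma (z : C) : C :=
  epsilon (inhabits (RtoC 0)) (fun g => is_Gamma z g).

(* Gauss's product expresses [ln |Gamma z|] and [arg (Gamma z)] as limits of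
   [Re z * ln n + ln n! - sum_(k <= n) ln |z + k|] and [Im z * ln n - sum_(k <= n) arg (z + k)].
   For [z = s / 2] and [z = (1 - s) / 2] the moduli and arguments of the factors [z + k] are
   values of [ln (t^2 + x^2)] and [atan (x / t)] on the grids [sigma + 2 N] and [1 - sigma + 2 N],
   so the sums are midpoint-rule approximations of integrals of these two functions. Their
   closed-form primitives produce the main terms; the midpoint errors are bounded by
   [1 / (t^2 + x^2)] and summed by telescoping against its primitive [atan (x / t) / t]; the
   constants then come from elementary bounds on [atan] and [ln]. *)

From Stdlib Require Import Reals Lra Lia Psatz ClassicalEpsilon Factorial.
From Coquelicot Require Import Coquelicot.
Open Scope R_scope.

Lemma derive_nonpos_le (f f' : R -> R) (a b : R) :
  a <= b -> (forall x, a <= x <= b -> is_derive f x (f' x)) ->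
  (forall x, a <= x <= b -> f' x <= 0) -> f b <= f a.
Proof.
  intros Hab Hd Hs. destruct (Req_dec a b) as [->|Hne]; [lra|].
  destruct (MVT_cor2 f f' a b) as [c [Hc1 Hc2]]; [lra| |].
  - intros c Hc. apply is_derive_Reals, Hd; lra.
  - assert (f' c <= 0) by (apply Hs; lra). nra.
Qed.

Lemma derive_nonneg_le (f f' : R -> R) (a b : R) :
  a <= b -> (forall x, a <= x <= b -> is_derive f x (f' x)) ->
  (forall x, a <= x <= b -> 0 <= f' x) -> f a <= f b.
Proof.
  intros Hab Hd Hs.
  enough (- f b <= - f a) by lra.
  apply (derive_nonpos_le (fun x => - f x) (fun x => - f' x) a b Hab).
  - intros x Hx. apply (is_derive_opp f x (f' x)). now apply Hd.
  - intros x Hx. specialize (Hs x Hx). lra.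
Qed.

Lemma atan_le_id u : 0 <= u -> atan u <= u.
Proof.
  intros Hu.
  enough (atan u - u <= atan 0 - 0) by (rewrite atan_0 in *; lra).
  apply (derive_nonpos_le (fun x => atan x - x) (fun x => / (1 + x^2) - 1) 0 u Hu).
  - intros x _. auto_derive; auto. field. nra.
  - intros x _. enough (/ (1 + x^2) <= / 1) by lra.
    apply Rinv_le_contravar; nra.
Qed.

Lemma atan_nonneg u : 0 <= u -> 0 <= atan u.
Proof.
  intros [Hu| <-]; [|rewrite atan_0; lra].
  rewrite <- atan_0. now apply Rlt_le, atan_increasing.
Qed.

Lemma atan_ge_cubic u : 0 <= u -> u - u^3/3 <= atan u.
Proof.
  intros Hu.
  enough (u - u^3/3 - atan u <= 0 - 0^3/3 - atan 0) by (rewrite atan_0 in *; lra).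
  apply (derive_nonpos_le (fun x => x - x^3/3 - atan x)
           (fun x => - x^4 / (1 + x^2)) 0 u Hu).
  - intros x _. auto_derive; auto. field. nra.
  - intros x _. assert (0 <= x^4 / (1 + x^2)) by (apply Rdiv_le_0_compat; nra).
    unfold Rdiv in *. lra.
Qed.

Lemma Rabs_atan_sub_id v : Rabs (atan v - v) <= Rabs v ^ 3 / 3.
Proof.
  destruct (Rle_lt_dec 0 v) as [Hv|Hv].
  - rewrite (Rabs_pos_eq v Hv). apply Rabs_le.
    assert (H1 := atan_le_id v Hv). assert (H2 := atan_ge_cubic v Hv). lra.
  - rewrite (Rabs_left v Hv). assert (Hv' : 0 <= -v) by lra.
    assert (H1 := atan_le_id (-v) Hv'). assert (H2 := atan_ge_cubic (-v) Hv').
    rewrite atan_opp in H1, H2. apply Rabs_le. lra.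
Qed.

Lemma ln_le_sub_1 x : 0 < x -> ln x <= x - 1.
Proof.
  intros Hx. rewrite <- (ln_exp (x - 1)).
  apply ln_le; [lra|]. assert (H := exp_ineq1_le (x - 1)). lra.
Qed.

Lemma ln_ge_1_sub_inv x : 0 < x -> 1 - / x <= ln x.
Proof.
  intros Hx. assert (H := ln_le_sub_1 (/ x) (Rinv_0_lt_compat _ Hx)).
  rewrite ln_Rinv in H by lra. lra.
Qed.

Lemma ln_succ_sub_bounds x : 0 < x -> / (x+1) <= ln (x+1) - ln x <= / x.
Proof.
  intros Hx. rewrite <- ln_div by lra.
  assert (Hq : 0 < (x+1)/x) by (apply Rdiv_lt_0_compat; lra).
  assert (H1 := ln_le_sub_1 _ Hq). assert (H2 := ln_ge_1_sub_inv _ Hq).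
  replace ((x+1)/x - 1) with (/x) in H1 by (field; lra).
  replace (1 - / ((x+1)/x)) with (/(x+1)) in H2 by (field; lra). lra.
Qed.

Lemma inv_sq_le_inv_sub x : 1 <= x -> / (x+1)^2 <= / x - / (x+1).
Proof.
  intros Hx. replace (/ x - / (x+1)) with (/ (x * (x+1))) by (field; lra).
  apply Rinv_le_contravar; nra.
Qed.

Lemma le_of_pow2_le x y : 0 <= y -> x^2 <= y^2 -> x <= y.
Proof. intros Hy H. destruct (Rle_lt_dec x y); auto. nra. Qed.

Lemma Rabs_sub_le_via (x c y e1 e2 : R) :
  Rabs (x - c) <= e1 -> Rabs (c - y) <= e2 -> Rabs (x - y) <= e1 + e2.
Proof.
  intros H1 H2. replace (x - y) with ((x - c) + (c - y)) by ring.
  eapply Rle_trans; [apply Rabs_triang | lra].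
Qed.

(** * The midpoint rule *)

Lemma is_derive_reflect_pair (G g : R -> R) (m s : R) (e : R) :
  is_derive G (m + s) (g (m + s)) -> is_derive G (m - s) (g (m - s)) ->
  is_derive (fun s => G (m + s) + e * G (m - s)) s (g (m + s) - e * g (m - s)).
Proof.
  intros Hp Hm. apply is_derive_Reals. apply is_derive_Reals in Hp, Hm.
  replace (g (m + s) - e * g (m - s))
    with (g (m + s) * 1 + e * (g (m - s) * (-1))) by ring.
  apply derivable_pt_lim_plus; [|apply derivable_pt_lim_scal].
  - apply (derivable_pt_lim_comp (fun s => m + s) G s 1); [|exact Hp].
    apply is_derive_Reals. auto_derive; auto; ring.
  - apply (derivable_pt_lim_comp (fun s => m - s) G s (-1)); [|exact Hm].
    apply is_derive_Reals. auto_derive; auto; ring.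
Qed.

Section MidpointRule.

Variables (F f g h : R -> R) (m M : R).
Hypothesis dF : forall x, m - 1 <= x <= m + 1 -> is_derive F x (f x).
Hypothesis df : forall x, m - 1 <= x <= m + 1 -> is_derive f x (g x).
Hypothesis dg : forall x, m - 1 <= x <= m + 1 -> is_derive g x (h x).
Hypothesis h_le : forall x, m - 1 <= x <= m + 1 -> h x <= M.

(* The three steps integrate [h (m + s) + h (m - s) <= 2 M] from [s = 0]. *)
Lemma midpoint_sym_sub_le s : 0 <= s <= 1 -> g (m + s) - g (m - s) <= 2 * M * s.
Proof.
  intros Hs.
  enough (g (m + s) + (-1) * g (m - s) - 2 * M * s
          <= g (m + 0) + (-1) * g (m - 0) - 2 * M * 0)
    by (rewrite Rplus_0_r, Rminus_0_r in *; lra).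
  apply (derive_nonpos_le (fun s => g (m + s) + (-1) * g (m - s) - 2 * M * s)
           (fun s => h (m + s) - (-1) * h (m - s) - 2 * M) 0 s (proj1 Hs)).
  - intros x Hx. apply (is_derive_minus (fun s => g (m + s) + (-1) * g (m - s))).
    + apply is_derive_reflect_pair; apply dg; lra.
    + auto_derive; auto; ring.
  - intros x Hx. assert (h (m + x) <= M) by (apply h_le; lra).
    assert (h (m - x) <= M) by (apply h_le; lra). lra.
Qed.

Lemma midpoint_sym_add_le s : 0 <= s <= 1 -> f (m + s) + f (m - s) - 2 * f m <= M * s^2.
Proof.
  intros Hs.
  enough (f (m + s) + 1 * f (m - s) - 2 * f m - M * s^2
          <= f (m + 0) + 1 * f (m - 0) - 2 * f m - M * 0^2)
    by (rewrite Rplus_0_r, Rminus_0_r in *; lra).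
  apply (derive_nonpos_le (fun s => f (m + s) + 1 * f (m - s) - 2 * f m - M * s^2)
           (fun s => g (m + s) - 1 * g (m - s) - 0 - 2 * M * s) 0 s (proj1 Hs)).
  - intros x Hx. apply (is_derive_minus (fun s => f (m + s) + 1 * f (m - s) - 2 * f m)).
    + apply (is_derive_minus (fun s => f (m + s) + 1 * f (m - s))).
      * apply is_derive_reflect_pair; apply df; lra.
      * auto_derive; auto.
    + auto_derive; auto; ring.
  - intros x Hx. assert (H := midpoint_sym_sub_le x ltac:(lra)). lra.
Qed.

Lemma midpoint_rule_upper : F (m + 1) - F (m - 1) - 2 * f m <= M / 3.
Proof.
  enough (F (m + 1) + (-1) * F (m - 1) - 2 * 1 * f m - M * 1^3 / 3
          <= F (m + 0) + (-1) * F (m - 0) - 2 * 0 * f m - M * 0^3 / 3)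
    by (rewrite Rplus_0_r, Rminus_0_r in *; lra).
  apply (derive_nonpos_le (fun s => F (m + s) + (-1) * F (m - s) - 2 * s * f m - M * s^3 / 3)
           (fun s => f (m + s) - (-1) * f (m - s) - 2 * f m - M * s^2) 0 1 ltac:(lra)).
  - intros x Hx. apply (is_derive_minus (fun s => F (m + s) + (-1) * F (m - s) - 2 * s * f m)).
    + apply (is_derive_minus (fun s => F (m + s) + (-1) * F (m - s))).
      * apply is_derive_reflect_pair; apply dF; lra.
      * auto_derive; auto; ring.
    + auto_derive; auto; field.
  - intros x Hx. assert (H := midpoint_sym_add_le x Hx). lra.
Qed.

End MidpointRule.

Definition midpoint_err (F f : R -> R) (m : R) : R := f m - (F (m + 1) - F (m - 1)) / 2.

Lemma midpoint_rule (F f g h : R -> R) (m M : R) :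
  (forall x, m - 1 <= x <= m + 1 -> is_derive F x (f x)) ->
  (forall x, m - 1 <= x <= m + 1 -> is_derive f x (g x)) ->
  (forall x, m - 1 <= x <= m + 1 -> is_derive g x (h x)) ->
  (forall x, m - 1 <= x <= m + 1 -> Rabs (h x) <= M) ->
  Rabs (midpoint_err F f m) <= M / 6.
Proof.
  intros dF df dg Hh.
  assert (Up := midpoint_rule_upper F f g h m M dF df dg
                  ltac:(intros x Hx; apply Rabs_le_between, Hh, Hx)).
  assert (Low := midpoint_rule_upper (fun x => - F x) (fun x => - f x)
                   (fun x => - g x) (fun x => - h x) m M).
  cbv beta in Low.
  assert (- F (m + 1) - - F (m - 1) - 2 * - f m <= M / 3).
  { apply Low; intros x Hx.
    - apply (is_derive_opp F x (f x)). now apply dF.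
    - apply (is_derive_opp f x (g x)). now apply df.
    - apply (is_derive_opp g x (h x)). now apply dg.
    - specialize (Hh x Hx). apply Rabs_le_between in Hh. lra. }
  unfold midpoint_err. apply Rabs_le_between. lra.
Qed.

Lemma is_lim_seq_scal_inv_INR (K : R) : is_lim_seq (fun n => K / INR n) 0.
Proof.
  replace (Finite 0) with (Rbar_mult K (Rbar_inv p_infty)) by (simpl; f_equal; ring).
  apply is_lim_seq_scal_l, is_lim_seq_inv; [apply is_lim_seq_INR | discriminate].
Qed.

(* [u (S n) +/- C / S n] are monotone and squeeze [u]. *)
Lemma ex_lim_seq_of_step_bound (u : nat -> R) (C : R) :
  (forall n, (1 <= n)%nat -> Rabs (u (S n) - u n) <= C * (/ INR n - / INR (S n))) ->
  exists L : R, is_lim_seq u L.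
Proof.
  intros H.
  assert (Hstep : forall n, Rabs (u (S (S n)) - u (S n))
                            <= C / INR (S n) - C / INR (S (S n))).
  { intros n. unfold Rdiv. rewrite <- Rmult_minus_distr_l. apply H. lia. }
  set (v n := u (S n) + C / INR (S n)).
  set (w n := u (S n) - C / INR (S n)).
  assert (Hv : forall n, v (S n) <= v n).
  { intros n. specialize (Hstep n). apply Rabs_le_between in Hstep. unfold v. lra. }
  assert (Hw : forall n, w n <= w (S n)).
  { intros n. specialize (Hstep n). apply Rabs_le_between in Hstep. unfold w. lra. }
  assert (HC : 0 <= C).
  { assert (H1 := H 1%nat (le_n 1)). assert (0 <= Rabs (u 2%nat - u 1%nat)) by apply Rabs_pos.
    replace (/ INR 1 - / INR 2) with (1/2) in H1 by (simpl; field). lra. }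
  assert (Hwv : forall n, w n <= v n).
  { intros n. unfold v, w.
    assert (0 <= C / INR (S n)) by (apply Rdiv_le_0_compat; [lra | apply lt_0_INR; lia]).
    lra. }
  assert (Hw0 : forall n, w 0%nat <= w n).
  { induction n as [|n IH]; [lra|]. specialize (Hw n). lra. }
  destruct (ex_finite_lim_seq_decr v (w 0%nat) Hv) as [L HL].
  { intros n. specialize (Hwv n). specialize (Hw0 n). lra. }
  exists L. apply is_lim_seq_incr_1.
  apply is_lim_seq_ext with (fun n => v n - C / INR (S n)); [intros n; unfold v; ring|].
  replace (Finite L) with (Rbar_minus L 0) by (simpl; f_equal; ring).
  apply is_lim_seq_minus'; [exact HL|].
  apply (is_lim_seq_incr_1 (fun n => C / INR n)), is_lim_seq_scal_inv_INR.
Qed.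

Lemma Rabs_lim_seq_le (u : nat -> R) (L c B K : R) : is_lim_seq u L ->
  (forall n, (1 <= n)%nat -> Rabs (u n - c) <= B + K / INR n) -> Rabs (L - c) <= B.
Proof.
  intros HL H.
  apply (is_lim_seq_le_loc (fun n => Rabs (u n - c)) (fun n => B + K / INR n)
           (Rabs (L - c)) B).
  - exists 1%nat. exact H.
  - apply (is_lim_seq_abs _ (L - c)).
    apply is_lim_seq_minus'; [exact HL | apply is_lim_seq_const].
  - replace (Finite B) with (Rbar_plus B 0) by (simpl; f_equal; ring).
    apply is_lim_seq_plus'; [apply is_lim_seq_const | apply is_lim_seq_scal_inv_INR].
Qed.

(** * Gauss's product in polar coordinates *)

Definition polar (r th : R) : C := (r * cos th, r * sin th).

Lemma Cexp_polar x y : Cexp (x, y) = polar (exp x) y.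
Proof. reflexivity. Qed.

Lemma RtoC_polar r : RtoC r = polar r 0.
Proof. unfold polar, RtoC. rewrite cos_0, sin_0. f_equal; ring. Qed.

Lemma polar_mult r1 a r2 b : Cmult (polar r1 a) (polar r2 b) = polar (r1 * r2) (a + b).
Proof. unfold polar, Cmult; simpl. rewrite cos_plus, sin_plus. f_equal; ring. Qed.

Lemma polar_div r1 a r2 b : 0 < r2 -> Cdiv (polar r1 a) (polar r2 b) = polar (r1 / r2) (a - b).
Proof.
  intros Hr. unfold polar, Cdiv, Cinv, Cmult; simpl. rewrite cos_minus, sin_minus.
  assert (Hs := sin2_cos2 b). unfold Rsqr in Hs.
  replace (r2 * cos b * (r2 * cos b * 1) + r2 * sin b * (r2 * sin b * 1)) with (r2 * r2)
    by (transitivity (r2 * r2 * (sin b * sin b + cos b * cos b)); [rewrite Hs|]; ring).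
  f_equal; field; lra.
Qed.

Lemma is_lim_seq_C (p q : nat -> R) (P Q : R) :
  is_lim_seq p P -> is_lim_seq q Q ->
  filterlim (fun n => ((p n, q n) : C)) eventually (locally ((P, Q) : C)).
Proof.
  intros Hp Hq S [eps HS].
  destruct (Hp _ (locally_ball P eps)) as [N1 H1].
  destruct (Hq _ (locally_ball Q eps)) as [N2 H2].
  exists (max N1 N2). intros n Hn. apply HS. split; [apply H1 | apply H2]; lia.
Qed.

Lemma CGamma_eq z g : is_Gamma z g -> CGamma z = g.
Proof.
  intros H. unfold CGamma.
  assert (He : is_Gamma z (epsilon (inhabits (RtoC 0)) (fun g => is_Gamma z g)))
    by (apply epsilon_spec; now exists g).
  exact (filterlim_locally_unique (gauss_seq z) _ _ He H).
Qed.

Section GaussPolar.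

(* Polar coordinates [z + k = exp (rho k) e^(i th k)] of the factors of Gauss's product,
   [z = a + i b]. *)
Variables (a b : R) (rho th : nat -> R).
Hypothesis factor_polar : forall k, ((a + INR k, b) : C) = polar (exp (rho k)) (th k).

Definition gauss_log_mod (n : nat) : R := a * ln (INR n) + ln (INR (fact n)) - sum_f_R0 rho n.
Definition gauss_arg (n : nat) : R := b * ln (INR n) - sum_f_R0 th n.

Lemma rising_prod_polar n :
  rising_prod (a, b) n = polar (exp (sum_f_R0 rho n)) (sum_f_R0 th n).
Proof.
  induction n as [|n IH]; cbn [rising_prod sum_f_R0].
  - rewrite <- factor_polar. f_equal. simpl. ring.
  - rewrite IH, exp_plus, <- polar_mult, <- factor_polar.
    f_equal. unfold Cplus, RtoC. simpl. f_equal; ring.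
Qed.

Lemma gauss_seq_polar n :
  gauss_seq (a, b) n = polar (exp (gauss_log_mod n)) (gauss_arg n).
Proof.
  unfold gauss_seq, gauss_log_mod, gauss_arg.
  rewrite rising_prod_polar, (RtoC_polar (INR (fact n))).
  replace (Cmult (a, b) (RtoC (ln (INR n)))) with ((a * ln (INR n), b * ln (INR n)) : C)
    by (unfold Cmult, RtoC; simpl; f_equal; ring).
  rewrite Cexp_polar, polar_mult, polar_div by apply exp_pos.
  unfold Rminus. rewrite !exp_plus, exp_Ropp, exp_ln by apply INR_fact_lt_0.
  f_equal; field; apply Rgt_not_eq, exp_pos.
Qed.

Lemma CGamma_polar (L1 L2 : R) :
  is_lim_seq gauss_log_mod L1 -> is_lim_seq gauss_arg L2 ->
  CGamma (a, b) = polar (exp L1) L2.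
Proof.
  intros H1 H2. apply CGamma_eq. unfold is_Gamma.
  apply filterlim_ext with (fun n => polar (exp (gauss_log_mod n)) (gauss_arg n)).
  { intros n. symmetry. apply gauss_seq_polar. }
  assert (Hexp : is_lim_seq (fun n => exp (gauss_log_mod n)) (exp L1))
    by (apply (is_lim_seq_continuous exp);
        [apply derivable_continuous_pt, derivable_pt_exp | exact H1]).
  unfold polar. apply is_lim_seq_C; apply is_lim_seq_mult'; try exact Hexp.
  - apply (is_lim_seq_continuous cos); [apply continuity_cos | exact H2].
  - apply (is_lim_seq_continuous sin); [apply continuity_sin | exact H2].
Qed.

End GaussPolar.

Lemma ln_succ_sub_inv_bound x : 1 <= x ->
  Rabs (ln (x + 1) - ln x - / (x + 1)) <= / x - / (x + 1).
Proof.
  intros Hx. assert (H := ln_succ_sub_bounds x ltac:(lra)). apply Rabs_le_between. lra.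
Qed.

Lemma sub_1_sub_ln_bounds q : / 4 <= q -> 0 <= (q - 1) - ln q <= 4 * (q - 1)^2.
Proof.
  intros Hq. assert (H1 := ln_le_sub_1 q ltac:(lra)).
  assert (H2 := ln_ge_1_sub_inv q ltac:(lra)).
  split; [lra|].
  replace (1 - / q) with ((q - 1) - (q - 1)^2 / q) in H2 by (field; lra).
  enough ((q - 1)^2 / q <= 4 * (q - 1)^2) by lra.
  unfold Rdiv. rewrite (Rmult_comm 4).
  apply Rmult_le_compat_l; [apply pow2_ge_0|].
  replace 4 with (/ / 4) by field. apply Rinv_le_contravar; lra.
Qed.

(* Writing [|a + m + i b|^2 = m^2 (1 + y)], the quantity below is
   [(y - ln (1 + y)) / 2 - |a + i b|^2 / (2 m^2)] with [y = O(1/m)]. *)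
Lemma ln_norm_shift_bound a b m : -1 < a -> 2 <= m ->
  Rabs (ln m - ln ((a + m)^2 + b^2) / 2 + a / m)
  <= (2 * (2 * Rabs a + a^2 + b^2)^2 + (a^2 + b^2) / 2) / m^2.
Proof.
  intros Ha Hm. set (K := 2 * Rabs a + a^2 + b^2). set (y := (2 * a * m + a^2 + b^2) / m^2).
  assert (Hq : (a + m)^2 + b^2 = m^2 * (1 + y)) by (unfold y; field; lra).
  assert (Hy4 : / 4 <= 1 + y).
  { apply Rmult_le_reg_l with (m^2); [nra|]. rewrite <- Hq. nra. }
  assert (Hln : ln m - ln ((a + m)^2 + b^2) / 2 + a / m
                = (y - ln (1 + y)) / 2 - (a^2 + b^2) / (2 * m^2)).
  { rewrite Hq, ln_mult by nra. replace (m^2) with (m * m) by ring.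
    rewrite ln_mult by lra. unfold y. field. lra. }
  assert (HK : Rabs (2 * a * m + a^2 + b^2) <= K * m).
  { unfold K. eapply Rle_trans; [apply Rabs_triang|].
    rewrite (Rabs_pos_eq (b^2)) by nra. eapply Rle_trans; [apply Rplus_le_compat_r, Rabs_triang|].
    rewrite (Rabs_pos_eq (a^2)) by nra. rewrite !Rabs_mult, (Rabs_pos_eq 2), (Rabs_pos_eq m) by lra.
    assert (0 <= Rabs a) by apply Rabs_pos. nra. }
  assert (Hy2 : y^2 <= K^2 / m^2).
  { replace (K^2 / m^2) with ((K * m)^2 / (m^2)^2) by (field; lra).
    replace (y^2) with ((2 * a * m + a^2 + b^2)^2 / (m^2)^2) by (unfold y; field; lra).
    unfold Rdiv. apply Rmult_le_compat_r; [apply Rlt_le, Rinv_0_lt_compat, pow_lt; nra|].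
    rewrite <- (pow2_abs (2 * a * m + a ^ 2 + b ^ 2)).
    apply pow_incr. split; [apply Rabs_pos | exact HK]. }
  assert (HL := sub_1_sub_ln_bounds (1 + y) Hy4).
  replace (1 + y - 1) with y in HL by ring.
  assert (0 <= (a^2 + b^2) / (2 * m^2)) by (apply Rdiv_le_0_compat; nra).
  rewrite Hln. apply Rabs_le_between.
  replace ((2 * K^2 + (a^2 + b^2) / 2) / m^2) with (2 * (K^2 / m^2) + (a^2 + b^2) / (2 * m^2))
    by (field; lra).
  lra.
Qed.

Lemma ln_mod_step_bound a b x : -1 < a -> 1 <= x ->
  Rabs (a * (ln (x + 1) - ln x) + (ln (x + 1) - ln ((a + (x + 1))^2 + b^2) / 2))
  <= (Rabs a + 2 * (2 * Rabs a + a^2 + b^2)^2 + (a^2 + b^2) / 2) * (/ x - / (x + 1)).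
Proof.
  intros Ha Hx.
  assert (H1 := ln_succ_sub_inv_bound x Hx).
  assert (H2 := ln_norm_shift_bound a b (x + 1) Ha ltac:(lra)).
  assert (Hsq := inv_sq_le_inv_sub x Hx).
  set (D := / x - / (x + 1)) in *.
  set (C2 := 2 * (2 * Rabs a + a^2 + b^2)^2 + (a^2 + b^2) / 2) in *.
  assert (0 <= C2).
  { assert (0 <= (2 * Rabs a + a^2 + b^2)^2) by apply pow2_ge_0.
    assert (0 <= a^2 + b^2) by nra. unfold C2. lra. }
  replace (a * (ln (x + 1) - ln x) + (ln (x + 1) - ln ((a + (x + 1))^2 + b^2) / 2))
    with (a * (ln (x + 1) - ln x - / (x + 1))
          + (ln (x + 1) - ln ((a + (x + 1))^2 + b^2) / 2 + a / (x + 1)))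
    by (unfold Rdiv; ring).
  eapply Rle_trans; [apply Rabs_triang|]. rewrite Rabs_mult.
  assert (Rabs a * Rabs (ln (x + 1) - ln x - / (x + 1)) <= Rabs a * D)
    by (apply Rmult_le_compat_l; [apply Rabs_pos | exact H1]).
  assert (C2 / (x + 1)^2 <= C2 * D) by (unfold Rdiv; apply Rmult_le_compat_l; lra).
  replace ((Rabs a + 2 * (2 * Rabs a + a^2 + b^2)^2 + (a^2 + b^2) / 2) * D)
    with (Rabs a * D + C2 * D) by (unfold C2; ring).
  lra.
Qed.

Lemma arg_step_bound a b x : -1 < a -> 1 <= x ->
  Rabs (b * (ln (x + 1) - ln x) - atan (b / (a + (x + 1))))
  <= (Rabs b + 2 * Rabs a * Rabs b + 3 * Rabs b ^ 3) * (/ x - / (x + 1)).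
Proof.
  intros Ha Hx. set (m := x + 1). assert (Hm : 2 <= m) by (unfold m; lra).
  assert (H1 := ln_succ_sub_inv_bound x Hx). fold m in H1.
  assert (Hsq := inv_sq_le_inv_sub x Hx). fold m in Hsq.
  set (D := / x - / m) in *.
  assert (Hb0 : 0 <= Rabs b) by apply Rabs_pos.
  assert (Ha0 : 0 <= Rabs a) by apply Rabs_pos.
  assert (Him : 0 < / m <= 1 / 2)
    by (split; [apply Rinv_0_lt_compat; lra | rewrite <- Rinv_div; apply Rinv_le_contravar; lra]).
  assert (Ham : / (a + m) <= 2 * / m)
    by (replace (2 * / m) with (/ (m / 2)) by (field; lra); apply Rinv_le_contravar; lra).
  assert (Ham0 : 0 < / (a + m)) by (apply Rinv_0_lt_compat; lra).
  set (v := b / (a + m)).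
  assert (P2 : Rabs (b / m - v) <= 2 * Rabs a * Rabs b * / m^2).
  { unfold v. replace (b / m - b / (a + m)) with (a * b * / m * / (a + m)) by (field; lra).
    rewrite !Rabs_mult, !Rabs_inv, (Rabs_pos_eq m), (Rabs_pos_eq (a + m)) by lra.
    replace (2 * Rabs a * Rabs b * / m^2) with (Rabs a * Rabs b * / m * (2 * / m))
      by (field; lra).
    apply Rmult_le_compat_l; [|exact Ham]. apply Rmult_le_pos; nra. }
  assert (P3 : Rabs (v - atan v) <= 3 * Rabs b ^ 3 * / m^2).
  { rewrite Rabs_minus_sym. eapply Rle_trans; [apply Rabs_atan_sub_id|].
    assert (Hv : Rabs v <= 2 * Rabs b * / m).
    { unfold v, Rdiv. rewrite Rabs_mult, Rabs_inv, (Rabs_pos_eq (a + m)) by lra. nra. }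
    assert (Rabs v ^ 3 <= (2 * Rabs b * / m)^3)
      by (apply pow_incr; split; [apply Rabs_pos | exact Hv]).
    assert (E : (2 * Rabs b * / m)^3 = 8 * (Rabs b ^ 3 * / m^2) * / m) by (field; lra).
    assert (0 <= Rabs b ^ 3 * / m^2)
      by (apply Rmult_le_pos; [apply pow_le; lra | apply Rlt_le, Rinv_0_lt_compat; nra]).
    nra. }
  replace (b * (ln m - ln x) - atan v)
    with (b * (ln m - ln x - / m) + (b / m - v) + (v - atan v)) by (unfold Rdiv; ring).
  eapply Rle_trans; [apply Rabs_triang|].
  eapply Rle_trans; [apply Rplus_le_compat_r, Rabs_triang|].
  rewrite Rabs_mult.
  assert (Rabs b * Rabs (ln m - ln x - / m) <= Rabs b * D) by (apply Rmult_le_compat_l; lra).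
  assert (0 <= Rabs a * Rabs b) by nra.
  assert (0 <= Rabs b ^ 3) by (apply pow_le; lra).
  nra.
Qed.

(** * Midpoint sums of [ln (t^2 + x^2)] and [atan (x / t)] *)

Lemma sum_f_R0_affine (f g : nat -> R) (al be : R) n :
  (forall k, g k = al * f k + be) -> sum_f_R0 g n = al * sum_f_R0 f n + INR (S n) * be.
Proof.
  intros Hg. induction n as [|n IH]; cbn [sum_f_R0]; rewrite Hg.
  - simpl. ring.
  - rewrite IH, (S_INR (S n)). ring.
Qed.

Lemma sum_midpoint_decomposition (F f : R -> R) (c : R) n :
  sum_f_R0 (fun k => f (c + 2 * INR k)) n
  = (F (c + 2 * INR n + 1) - F (c - 1)) / 2
    + sum_f_R0 (fun k => midpoint_err F f (c + 2 * INR k)) n.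
Proof.
  unfold midpoint_err. induction n as [|n IH]; cbn [sum_f_R0].
  - simpl. replace (c + 2 * 0) with c by ring. field.
  - rewrite IH, S_INR.
    replace (c + 2 * (INR n + 1) - 1) with (c + 2 * INR n + 1) by ring. field.
Qed.

Section LogAtanKernel.

Variable t : R.
Hypothesis t_pos : 0 < t.

Definition log_sq (x : R) : R := ln (t^2 + x^2).
Definition log_sq_prim (x : R) : R := x * ln (t^2 + x^2) - 2 * x + 2 * t * atan (x / t).
Definition atan_div (x : R) : R := atan (x / t).
Definition atan_div_prim (x : R) : R := x * atan (x / t) - t / 2 * ln (t^2 + x^2).
Definition inv_sq (x : R) : R := / (t^2 + x^2).
Definition inv_sq_prim (x : R) : R := atan (x / t) / t.

Let sq_pos x : 0 < t^2 + x^2.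
Proof. nra. Qed.

Ltac solve_derive x :=
  assert (Hx := sq_pos x); auto_derive;
  [repeat split; try intro; nra | field; repeat split; try intro; nra].

Lemma is_derive_log_sq_prim x : is_derive log_sq_prim x (log_sq x).
Proof.
  unfold log_sq_prim, log_sq. assert (Hx := sq_pos x).
  auto_derive; [repeat split; lra|].
  replace (t * (t * 1) + x * (x * 1)) with (t^2 + x^2) by ring. field. nra.
Qed.

Lemma is_derive_log_sq x : is_derive log_sq x (2 * x / (t^2 + x^2)).
Proof. unfold log_sq. solve_derive x. Qed.

Lemma is_derive_log_sq' x :
  is_derive (fun x => 2 * x / (t^2 + x^2)) x (2 * (t^2 - x^2) / (t^2 + x^2)^2).
Proof. solve_derive x. Qed.

Lemma is_derive_atan_div_prim x : is_derive atan_div_prim x (atan_div x).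
Proof.
  unfold atan_div_prim, atan_div. assert (Hx := sq_pos x).
  auto_derive; [repeat split; lra|]. unfold Rdiv. field. repeat split; nra.
Qed.

Lemma is_derive_atan_div x : is_derive atan_div x (t / (t^2 + x^2)).
Proof. unfold atan_div. solve_derive x. Qed.

Lemma is_derive_atan_div' x :
  is_derive (fun x => t / (t^2 + x^2)) x (- 2 * t * x / (t^2 + x^2)^2).
Proof. solve_derive x. Qed.

Lemma is_derive_inv_sq_prim x : is_derive inv_sq_prim x (inv_sq x).
Proof. unfold inv_sq_prim, inv_sq. solve_derive x. Qed.

Definition inv_sq_dominated (w : R) (e : R -> R) : Prop :=
  forall m B, (forall x, m - 1 <= x <= m + 1 -> inv_sq x <= B) -> Rabs (e m) <= w * B.

Lemma midpoint_err_log_sq_dominated :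
  inv_sq_dominated (1/3) (midpoint_err log_sq_prim log_sq).
Proof.
  intros m B HB. replace (1/3 * B) with (2 * B / 6) by field.
  apply (midpoint_rule _ _ _ _ m (2 * B) (fun x _ => is_derive_log_sq_prim x)
           (fun x _ => is_derive_log_sq x) (fun x _ => is_derive_log_sq' x)).
  intros x Hx. specialize (HB x Hx). unfold inv_sq in HB. assert (Hq := sq_pos x).
  assert (Rabs (t^2 - x^2) <= t^2 + x^2) by (apply Rabs_le; nra).
  unfold Rdiv. rewrite !Rabs_mult, Rabs_inv, (Rabs_pos_eq 2), (Rabs_pos_eq ((t^2 + x^2)^2)) by nra.
  replace (/ (t^2 + x^2)) with ((t^2 + x^2) * / (t^2 + x^2)^2) in HB by (field; lra).
  assert (0 < / (t^2 + x^2)^2) by (apply Rinv_0_lt_compat; nra). nra.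
Qed.

Lemma midpoint_err_atan_div_dominated :
  inv_sq_dominated (1/6) (midpoint_err atan_div_prim atan_div).
Proof.
  intros m B HB. replace (1/6 * B) with (B / 6) by field.
  apply (midpoint_rule _ _ _ _ m B (fun x _ => is_derive_atan_div_prim x)
           (fun x _ => is_derive_atan_div x) (fun x _ => is_derive_atan_div' x)).
  intros x Hx. specialize (HB x Hx). unfold inv_sq in HB. assert (Hq := sq_pos x).
  assert (Rabs (- 2 * t * x) <= t^2 + x^2).
  { assert (0 <= (t + x)^2) by apply pow2_ge_0. assert (0 <= (t - x)^2) by apply pow2_ge_0.
    apply Rabs_le. split; nra. }
  unfold Rdiv. rewrite Rabs_mult, Rabs_inv, (Rabs_pos_eq ((t^2 + x^2)^2)) by nra.
  replace (/ (t^2 + x^2)) with ((t^2 + x^2) * / (t^2 + x^2)^2) in HB by (field; lra).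
  assert (0 < / (t^2 + x^2)^2) by (apply Rinv_0_lt_compat; nra). nra.
Qed.

Lemma inv_sq_le_inv_t2 x : inv_sq x <= / t^2.
Proof. unfold inv_sq. apply Rinv_le_contravar; nra. Qed.

Lemma inv_sq_antimono p x : 0 <= p <= x -> inv_sq x <= inv_sq p.
Proof. intros Hp. unfold inv_sq. apply Rinv_le_contravar; nra. Qed.

Lemma inv_sq_le_prim_sub p : 2 <= p -> inv_sq p <= (inv_sq_prim p - inv_sq_prim (p - 2)) / 2.
Proof.
  intros Hp.
  enough (inv_sq_prim (p - 2) - (p - 2) * inv_sq p <= inv_sq_prim p - p * inv_sq p) by lra.
  apply (derive_nonneg_le (fun x => inv_sq_prim x - x * inv_sq p)
           (fun x => inv_sq x - inv_sq p) (p - 2) p ltac:(lra)).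
  - intros x _. apply (is_derive_minus inv_sq_prim (fun x => x * inv_sq p)).
    + apply is_derive_inv_sq_prim.
    + auto_derive; auto; ring.
  - intros x Hx. assert (inv_sq p <= inv_sq x) by (apply inv_sq_antimono; lra). lra.
Qed.

Lemma inv_sq_prim_bounds x : 0 <= x -> 0 <= inv_sq_prim x <= PI / (2 * t).
Proof.
  intros Hx. unfold inv_sq_prim.
  assert (0 <= atan (x / t)) by (apply atan_nonneg, Rdiv_le_0_compat; lra).
  assert (H2 := atan_bound (x / t)).
  replace (PI / (2 * t)) with ((PI / 2) / t) by (field; lra).
  split; [apply Rdiv_le_0_compat; lra|].
  apply Rmult_le_compat_r; [apply Rlt_le, Rinv_0_lt_compat|]; lra.
Qed.

(* Each term is bounded by [inv_sq] at the left end of its interval, hence by the mean of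
   [inv_sq] over the interval of length 2 just to its left; these means telescope. *)
Lemma grid_sum_bound_ge_1 (e : R -> R) (w c : R) : 0 <= w -> 1 <= c -> inv_sq_dominated w e ->
  forall n, Rabs (sum_f_R0 (fun k => e (c + 2 * INR k)) n) <= w * (/ t^2 + PI / (4 * t)).
Proof.
  intros Hw Hc He n.
  enough (Rabs (sum_f_R0 (fun k => e (c + 2 * INR k)) n)
          <= w * (/ t^2 + (inv_sq_prim (c - 1 + 2 * INR n) - inv_sq_prim (c - 1)) / 2)).
  { eapply Rle_trans; [eassumption|]. apply Rmult_le_compat_l; [exact Hw|].
    assert (0 <= INR n) by apply pos_INR.
    assert (B1 := inv_sq_prim_bounds (c - 1 + 2 * INR n) ltac:(lra)).
    assert (B2 := inv_sq_prim_bounds (c - 1) ltac:(lra)).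
    replace (PI / (4 * t)) with (PI / (2 * t) / 2) by (field; lra). lra. }
  induction n as [|n IH]; cbn [sum_f_R0].
  - apply Rle_trans with (w * / t^2); [apply He; intros x _; apply inv_sq_le_inv_t2|].
    simpl. rewrite Rmult_0_r, Rplus_0_r, Rminus_diag. lra.
  - eapply Rle_trans; [apply Rabs_triang|].
    set (p := c - 1 + 2 * INR (S n)).
    assert (0 <= INR n) by apply pos_INR.
    assert (Hp : 2 <= p) by (unfold p; rewrite S_INR; lra).
    assert (Rabs (e (c + 2 * INR (S n))) <= w * ((inv_sq_prim p - inv_sq_prim (p - 2)) / 2)).
    { apply He. intros x Hx.
      assert (inv_sq x <= inv_sq p) by (apply inv_sq_antimono; unfold p in *; lra).
      assert (inv_sq p <= (inv_sq_prim p - inv_sq_prim (p - 2)) / 2)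
        by (apply inv_sq_le_prim_sub; lra).
      lra. }
    replace (p - 2) with (c - 1 + 2 * INR n) in * by (unfold p; rewrite S_INR; ring).
    lra.
Qed.

Lemma grid_sum_bound_ge_neg1 (e : R -> R) (w c : R) : 0 <= w -> -1 <= c ->
  inv_sq_dominated w e ->
  forall n, Rabs (sum_f_R0 (fun k => e (c + 2 * INR k)) n) <= w * (2 / t^2 + PI / (4 * t)).
Proof.
  intros Hw Hc He n.
  assert (H0 : Rabs (e c) <= w * / t^2) by (apply He; intros x _; apply inv_sq_le_inv_t2).
  assert (0 <= w * / t^2) by (apply Rmult_le_pos; [lra | apply Rlt_le, Rinv_0_lt_compat; nra]).
  assert (0 <= w * (PI / (4 * t)))
    by (apply Rmult_le_pos; [lra | apply Rlt_le, Rdiv_lt_0_compat; [apply PI_RGT_0 | lra]]).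
  destruct n as [|n].
  - cbn [sum_f_R0]. replace (c + 2 * INR 0) with c by (simpl; ring).
    unfold Rdiv. nra.
  - rewrite decomp_sum by lia. simpl pred.
    replace (c + 2 * INR 0) with c by (simpl; ring).
    rewrite (sum_eq _ (fun k => e (c + 2 + 2 * INR k)))
      by (intros k _; rewrite S_INR; f_equal; ring).
    assert (G := grid_sum_bound_ge_1 e w (c + 2) Hw ltac:(lra) He n).
    eapply Rle_trans; [apply Rabs_triang|].
    replace (w * (2 / t^2 + PI / (4 * t))) with (w * / t^2 + w * (/ t^2 + PI / (4 * t)))
      by (field; lra).
    lra.
Qed.

End LogAtanKernel.

(** * Gamma at [c / 2 +- i t / 2] *)

Section HalfLineGamma.

Variable t : R.
Hypothesis t_pos : 0 < t.

Lemma exp_half_log_sq x : exp (log_sq t x / 2 - ln 2) = sqrt (t^2 + x^2) / 2.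
Proof.
  assert (Hq : 0 < t^2 + x^2) by nra.
  unfold log_sq, Rminus. rewrite exp_plus, exp_Ropp, exp_ln by lra.
  rewrite <- Rpower_sqrt by exact Hq. unfold Rpower, Rdiv.
  rewrite (Rmult_comm (ln _)). reflexivity.
Qed.

Lemma half_point_polar x :
  ((x / 2, t / 2) : C) = polar (exp (log_sq t x / 2 - ln 2)) (PI / 2 - atan_div t x).
Proof.
  unfold polar, atan_div. rewrite exp_half_log_sq, cos_shift, sin_shift, cos_atan, sin_atan.
  unfold Rsqr. set (c := 1 + x / t * (x / t)).
  assert (Hc : 0 < c) by (unfold c; nra).
  assert (E : sqrt (t^2 + x^2) = t * sqrt c).
  { replace (t^2 + x^2) with (t^2 * c) by (unfold c; field; lra).
    rewrite sqrt_mult_alt by nra. rewrite <- Rsqr_pow2, sqrt_Rsqr; lra. }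
  rewrite E. assert (0 < sqrt c) by (apply sqrt_lt_R0; lra).
  f_equal; field; lra.
Qed.

Lemma half_point_polar_conj x :
  ((x / 2, - (t / 2)) : C) = polar (exp (log_sq t x / 2 - ln 2)) (- (PI / 2 - atan_div t x)).
Proof.
  assert (H := half_point_polar x). unfold polar in *. rewrite cos_neg, sin_neg.
  injection H as Hre Him. rewrite <- Ropp_mult_distr_r, <- Hre, <- Him. reflexivity.
Qed.

Definition ln_mod_seq (c : R) : nat -> R :=
  gauss_log_mod (c / 2) (fun k => log_sq t (c + 2 * INR k) / 2 - ln 2).
Definition arg_seq (c : R) : nat -> R :=
  gauss_arg (t / 2) (fun k => PI / 2 - atan_div t (c + 2 * INR k)).

Lemma half_shift_eq c k : c / 2 + INR k = (c + 2 * INR k) / 2.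
Proof. field. Qed.

Lemma CGamma_half c (L1 L2 : R) :
  is_lim_seq (ln_mod_seq c) L1 -> is_lim_seq (arg_seq c) L2 ->
  CGamma (c / 2, t / 2) = polar (exp L1) L2.
Proof.
  apply CGamma_polar. intros k. rewrite half_shift_eq. apply half_point_polar.
Qed.

Lemma CGamma_half_conj c (L1 L2 : R) :
  is_lim_seq (ln_mod_seq c) L1 -> is_lim_seq (arg_seq c) L2 ->
  CGamma (c / 2, - (t / 2)) = polar (exp L1) (- L2).
Proof.
  intros H1 H2.
  apply (CGamma_polar (c / 2) (- (t / 2)) (fun k => log_sq t (c + 2 * INR k) / 2 - ln 2)
           (fun k => - (PI / 2 - atan_div t (c + 2 * INR k)))).
  - intros k. rewrite half_shift_eq. apply half_point_polar_conj.
  - exact H1.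
  - apply is_lim_seq_ext with (fun n => - arg_seq c n).
    + intros n. unfold arg_seq, gauss_arg.
      rewrite (sum_f_R0_affine (fun k => PI / 2 - atan_div t (c + 2 * INR k))
                 (fun k => - (PI / 2 - atan_div t (c + 2 * INR k))) (-1) 0)
        by (intros k; ring).
      ring.
    + now apply (is_lim_seq_opp _ L2).
Qed.

Lemma ln_mod_seq_cvg c : -2 < c -> exists L : R, is_lim_seq (ln_mod_seq c) L.
Proof.
  intros Hc.
  apply (ex_lim_seq_of_step_bound _
           (Rabs (c/2) + 2 * (2 * Rabs (c/2) + (c/2)^2 + (t/2)^2)^2 + ((c/2)^2 + (t/2)^2) / 2)).
  intros n Hn. assert (Hx : 1 <= INR n) by (apply (le_INR 1); lia).
  rewrite S_INR. eapply Rle_trans; [|apply (ln_mod_step_bound (c / 2) (t / 2)); lra].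
  right. f_equal. unfold ln_mod_seq, gauss_log_mod. cbn [sum_f_R0].
  rewrite fact_simpl, mult_INR, S_INR, ln_mult by (try apply INR_fact_lt_0; lra).
  assert (Hq : 0 < (c / 2 + (INR n + 1))^2 + (t / 2)^2) by nra.
  replace (log_sq t (c + 2 * (INR n + 1)) / 2 - ln 2)
    with (ln ((c / 2 + (INR n + 1))^2 + (t / 2)^2) / 2).
  - ring.
  - unfold log_sq. replace (t^2 + (c + 2 * (INR n + 1))^2)
      with (2 * 2 * ((c / 2 + (INR n + 1))^2 + (t / 2)^2)) by field.
    rewrite !ln_mult by lra. field.
Qed.

Lemma arg_seq_cvg c : -2 < c -> exists L : R, is_lim_seq (arg_seq c) L.
Proof.
  intros Hc.
  apply (ex_lim_seq_of_step_bound _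
           (Rabs (t/2) + 2 * Rabs (c/2) * Rabs (t/2) + 3 * Rabs (t/2) ^ 3)).
  intros n Hn. assert (Hx : 1 <= INR n) by (apply (le_INR 1); lia).
  rewrite S_INR. eapply Rle_trans; [|apply (arg_step_bound (c / 2) (t / 2)); lra].
  right. f_equal. unfold arg_seq, gauss_arg, atan_div. cbn [sum_f_R0]. rewrite S_INR.
  rewrite <- atan_inv by (apply Rdiv_lt_0_compat; lra).
  replace (/ ((c + 2 * (INR n + 1)) / t)) with (t / 2 / (c / 2 + (INR n + 1))) by (field; lra).
  ring.
Qed.

End HalfLineGamma.

(** * Asymptotics of the two grid sums *)

Lemma ln_norm_ratio_bounds t x X : 1 <= x -> 2 * x + 1/2 <= X <= 2 * x + 5/2 ->
  0 <= ln ((t^2 + X^2) / (4 * x^2)) <= (t^2 + 17) / (4 * x).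
Proof.
  intros Hx HX.
  assert (Hd : 0 < 4 * x^2) by nra.
  assert (Hr : 1 <= (t^2 + X^2) / (4 * x^2)).
  { apply Rmult_le_reg_r with (4 * x^2); auto. unfold Rdiv.
    rewrite Rmult_assoc, Rinv_l, Rmult_1_r by lra. nra. }
  split.
  - rewrite <- ln_1. apply ln_le; lra.
  - eapply Rle_trans; [apply ln_le_sub_1; lra|].
    replace ((t^2 + X^2) / (4 * x^2) - 1) with ((t^2 + X^2 - 4 * x^2) / (4 * x^2)) by (field; lra).
    replace ((t^2 + 17) / (4 * x)) with (((t^2 + 17) * x) / (4 * x^2)) by (field; lra).
    unfold Rdiv. apply Rmult_le_compat_r; [apply Rlt_le, Rinv_0_lt_compat; lra|].
    nra.
Qed.

Lemma mul_atan_inv_sub_bounds t X : 0 <= t -> 0 < X ->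
  - (t^3 / (3 * X^2)) <= X * atan (t / X) - t <= 0.
Proof.
  intros Ht HX.
  assert (Hu : 0 <= t / X) by (apply Rdiv_le_0_compat; lra).
  assert (A1 := atan_le_id (t / X) Hu). assert (A2 := atan_ge_cubic (t / X) Hu).
  set (u := t / X) in *.
  assert (Et : t = X * u) by (unfold u; field; lra).
  assert (Et3 : t^3 / (3 * X^2) = X * (u^3 / 3)) by (rewrite Et; field; lra).
  rewrite Et3. rewrite Et at 2.
  assert (X * (atan u - u) <= 0) by (apply Rmult_le_0_l; lra).
  assert (X * (- (u^3 / 3)) <= X * (atan u - u)) by (apply Rmult_le_compat_l; lra).
  split; lra.
Qed.

Section Stirling.

Variables (t sigma : R).
Hypothesis t_pos : 0 < t.
Hypothesis sigma_range : -1/2 <= sigma < 0.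

(* By the mean value theorem the bracket is [- (1/2 - sigma) / 2 * ln ((t^2 + xi^2) / (4 x^2))]
   for some [xi] within [1] of [2 x + 1]. *)
Lemma log_sq_prim_tail_bound x : 1 <= x ->
  Rabs ((1/2 - sigma) * ln x
        + (log_sq_prim t (sigma + 2 * x + 1) - log_sq_prim t (1 - sigma + 2 * x + 1)) / 4
        - (sigma - 1/2) * ln 2)
  <= (t^2 + 17) / (8 * x).
Proof.
  intros Hx.
  destruct (MVT_cor2 (log_sq_prim t) (log_sq t) (sigma + 2 * x + 1) (1 - sigma + 2 * x + 1))
    as [xi [Hxi Hxi2]]; [lra| |].
  { intros c _. apply is_derive_Reals, is_derive_log_sq_prim, t_pos. }
  assert (HL := ln_norm_ratio_bounds t x xi Hx ltac:(lra)).
  replace ((1/2 - sigma) * ln x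
           + (log_sq_prim t (sigma + 2 * x + 1) - log_sq_prim t (1 - sigma + 2 * x + 1)) / 4
           - (sigma - 1/2) * ln 2)
    with (- ((1/2 - sigma) / 2) * ln ((t^2 + xi^2) / (4 * x^2))).
  - rewrite Rabs_mult, Rabs_Ropp, !Rabs_pos_eq by lra.
    replace ((t^2 + 17) / (8 * x)) with ((1/2) * ((t^2 + 17) / (4 * x))) by (field; lra).
    apply Rmult_le_compat; lra.
  - replace (log_sq_prim t (sigma + 2 * x + 1) - log_sq_prim t (1 - sigma + 2 * x + 1))
      with (- (log_sq t xi * (1 - 2 * sigma))) by lra.
    unfold log_sq. rewrite ln_div by nra.
    replace (4 * x^2) with (2 * 2 * (x * x)) by ring. rewrite !ln_mult by nra. field.
Qed.

Lemma atan_div_prim_expand X x : 0 < X -> 0 < x ->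
  atan_div_prim t X
  = PI * X / 2 - t - (X * atan (t / X) - t) - t / 2 * ln ((t^2 + X^2) / (4 * x^2))
    - t * ln 2 - t * ln x.
Proof.
  intros HX Hx. unfold atan_div_prim.
  replace (atan (X / t)) with (PI / 2 - atan (t / X))
    by (rewrite <- atan_inv by (apply Rdiv_lt_0_compat; lra); f_equal; field; lra).
  rewrite ln_div by nra. replace (4 * x^2) with (2 * 2 * (x * x)) by ring.
  rewrite !ln_mult by nra. field.
Qed.

Lemma atan_div_prim_tail_bound x : 1 <= x ->
  Rabs (- t * ln x + PI * (x + 1)
        - (atan_div_prim t (sigma + 2 * x + 1) + atan_div_prim t (1 - sigma + 2 * x + 1)) / 2
        - (PI / 4 + t + t * ln 2))
  <= (t^3 / 12 + t * (t^2 + 17) / 8) / x.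
Proof.
  intros Hx.
  set (X1 := sigma + 2 * x + 1). set (X2 := 1 - sigma + 2 * x + 1).
  assert (H1 : 0 < X1) by (unfold X1; lra). assert (H2 : 0 < X2) by (unfold X2; lra).
  rewrite (atan_div_prim_expand X1 x), (atan_div_prim_expand X2 x) by lra.
  assert (L1 := ln_norm_ratio_bounds t x X1 Hx ltac:(unfold X1; lra)).
  assert (L2 := ln_norm_ratio_bounds t x X2 Hx ltac:(unfold X2; lra)).
  assert (B1 := mul_atan_inv_sub_bounds t X1 ltac:(lra) H1).
  assert (B2 := mul_atan_inv_sub_bounds t X2 ltac:(lra) H2).
  assert (C : forall X, 2 * x + 1/2 <= X -> t^3 / (3 * X^2) <= t^3 / 12 / x).
  { intros X HX. replace (t^3 / 12 / x) with (t^3 / (3 * (4 * x))) by (field; lra).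
    unfold Rdiv. apply Rmult_le_compat_l; [apply pow_le; lra|].
    apply Rinv_le_contravar; nra. }
  assert (C1 := C X1 ltac:(unfold X1; lra)). assert (C2 := C X2 ltac:(unfold X2; lra)).
  set (l1 := ln ((t^2 + X1^2) / (4 * x^2))) in *.
  set (l2 := ln ((t^2 + X2^2) / (4 * x^2))) in *.
  set (a1 := X1 * atan (t / X1) - t) in *.
  set (a2 := X2 * atan (t / X2) - t) in *.
  replace (- t * ln x + PI * (x + 1)
     - (PI * X1 / 2 - t - a1 - t / 2 * l1 - t * ln 2 - t * ln x
        + (PI * X2 / 2 - t - a2 - t / 2 * l2 - t * ln 2 - t * ln x)) / 2
     - (PI / 4 + t + t * ln 2)) with ((a1 + a2) / 2 + t / 4 * (l1 + l2))
    by (unfold X1, X2; field).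
  assert (t / 4 * (l1 + l2) <= t * (t^2 + 17) / 8 / x).
  { replace (t * (t^2 + 17) / 8 / x) with (t / 4 * (2 * ((t^2 + 17) / (4 * x)))) by (field; lra).
    apply Rmult_le_compat_l; lra. }
  assert (0 <= t / 4 * (l1 + l2)) by (apply Rmult_le_pos; lra).
  replace ((t^3 / 12 + t * (t^2 + 17) / 8) / x) with (t^3 / 12 / x + t * (t^2 + 17) / 8 / x)
    by (field; lra).
  apply Rabs_le. split; lra.
Qed.

Lemma half_atan_div_bounds c : 0 <= c -> c / 2 - c^3 / (6 * t^2) <= t / 2 * atan (c / t) <= c / 2.
Proof.
  intros Hc. assert (Hu : 0 <= c / t) by (apply Rdiv_le_0_compat; lra).
  assert (A1 := atan_le_id (c / t) Hu). assert (A2 := atan_ge_cubic (c / t) Hu).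
  replace (c / 2) with (t / 2 * (c / t)) at 2 by (field; lra).
  replace (c / 2 - c^3 / (6 * t^2)) with (t / 2 * (c / t - (c / t)^3 / 3)) by (field; lra).
  split; apply Rmult_le_compat_l; lra.
Qed.

Lemma mul_atan_div_bounds c : 0 <= c -> 0 <= c * atan (c / t) <= c^2 / t.
Proof.
  intros Hc. assert (Hu : 0 <= c / t) by (apply Rdiv_le_0_compat; lra).
  assert (A1 := atan_le_id (c / t) Hu). assert (A2 := atan_nonneg (c / t) Hu).
  replace (c^2 / t) with (c * (c / t)) by (field; lra). split; nra.
Qed.

Lemma ln_sq_sub_ln_bounds c : 0 <= ln (t^2 + c^2) - 2 * ln t <= c^2 / t^2.
Proof.
  replace (2 * ln t) with (ln (t^2))
    by (replace (t^2) with (t * t) by ring; rewrite ln_mult by lra; ring).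
  assert (0 <= c^2 / t^2) by (apply Rdiv_le_0_compat; nra).
  rewrite <- ln_div by nra.
  replace ((t^2 + c^2) / t^2) with (1 + c^2 / t^2) by (field; lra).
  split.
  - rewrite <- ln_1. apply ln_le; lra.
  - eapply Rle_trans; [apply ln_le_sub_1; lra | lra].
Qed.

Lemma ln_mod_main_term_bound :
  Rabs ((sigma - 1/2) * ln 2 + (log_sq_prim t (- sigma) - log_sq_prim t (sigma - 1)) / 4
        - ((1 - sigma) / 4 * ln ((sigma^2 + t^2) / 4) - sigma / 4 * ln (((1 - sigma)^2 + t^2) / 4)))
  <= (((1 - sigma)^3 + (- sigma)^3) / 6 + (1 - 2 * sigma) / 4) / t^2.
Proof.
  assert (B1 := half_atan_div_bounds (1 - sigma) ltac:(lra)).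
  assert (B2 := half_atan_div_bounds (- sigma) ltac:(lra)).
  assert (Hw : 0 < t^2 + (1 - sigma)^2) by nra. assert (Hz : 0 < t^2 + sigma^2) by nra.
  assert (D : 0 <= ln (t^2 + (1 - sigma)^2) - ln (t^2 + sigma^2) <= (1 - 2 * sigma) / t^2).
  { rewrite <- ln_div by lra.
    replace ((t^2 + (1 - sigma)^2) / (t^2 + sigma^2)) with (1 + (1 - 2 * sigma) / (t^2 + sigma^2))
      by (field; lra).
    assert (0 <= (1 - 2 * sigma) / (t^2 + sigma^2)) by (apply Rdiv_le_0_compat; lra).
    assert ((1 - 2 * sigma) / (t^2 + sigma^2) <= (1 - 2 * sigma) / t^2)
      by (unfold Rdiv; apply Rmult_le_compat_l; [lra | apply Rinv_le_contravar; nra]).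
    split; [rewrite <- ln_1; apply ln_le; lra|].
    eapply Rle_trans; [apply ln_le_sub_1; lra | lra]. }
  replace ((sigma - 1/2) * ln 2 + (log_sq_prim t (- sigma) - log_sq_prim t (sigma - 1)) / 4
           - ((1 - sigma) / 4 * ln ((sigma^2 + t^2) / 4)
              - sigma / 4 * ln (((1 - sigma)^2 + t^2) / 4)))
    with ((sigma - 1/2 + t / 2 * atan ((1 - sigma) / t) + t / 2 * atan ((- sigma) / t))
          + (ln (t^2 + (1 - sigma)^2) - ln (t^2 + sigma^2)) / 4).
  2: { unfold log_sq_prim. rewrite !ln_div by nra. replace 4 with (2 * 2) by ring.
       rewrite ln_mult by lra.
       replace ((sigma - 1) / t) with (- ((1 - sigma) / t)) by (field; lra). rewrite atan_opp.
       replace ((- sigma)^2) with (sigma^2) by ring.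
       replace ((sigma - 1)^2) with ((1 - sigma)^2) by ring.
       replace (sigma^2 + t^2) with (t^2 + sigma^2) by ring.
       replace ((1 - sigma)^2 + t^2) with (t^2 + (1 - sigma)^2) by ring. field. }
  assert (0 <= (1 - sigma)^3 + (- sigma)^3) by nra.
  assert (Ht2 : 0 < t^2) by nra.
  replace ((((1 - sigma)^3 + (- sigma)^3) / 6 + (1 - 2 * sigma) / 4) / t^2)
    with (((1 - sigma)^3 / (6 * t^2) + (- sigma)^3 / (6 * t^2)) + (1 - 2 * sigma) / t^2 / 4)
    by (field; lra).
  apply Rabs_le. split; lra.
Qed.

Lemma arg_main_term_bound :
  Rabs ((atan_div_prim t (sigma - 1) + atan_div_prim t (- sigma)) / 2 + t * ln t)
  <= ((1 - sigma)^2 + sigma^2) / (2 * t).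
Proof.
  assert (B1 := mul_atan_div_bounds (1 - sigma) ltac:(lra)).
  assert (B2 := mul_atan_div_bounds (- sigma) ltac:(lra)).
  assert (L1 := ln_sq_sub_ln_bounds (1 - sigma)). assert (L2 := ln_sq_sub_ln_bounds sigma).
  replace ((atan_div_prim t (sigma - 1) + atan_div_prim t (- sigma)) / 2 + t * ln t)
    with (((1 - sigma) * atan ((1 - sigma) / t) + (- sigma) * atan ((- sigma) / t)) / 2
          - t / 4 * (ln (t^2 + (1 - sigma)^2) - 2 * ln t)
          - t / 4 * (ln (t^2 + sigma^2) - 2 * ln t)).
  2: { unfold atan_div_prim.
       replace ((sigma - 1) / t) with (- ((1 - sigma) / t)) by (field; lra). rewrite atan_opp.
       replace ((- sigma)^2) with (sigma^2) by ring.
       replace ((sigma - 1)^2) with ((1 - sigma)^2) by ring.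
       field. }
  replace ((- sigma)^2) with (sigma^2) in B2 by ring.
  assert (E1 : t / 4 * ((1 - sigma)^2 / t^2) = (1 - sigma)^2 / t / 4) by (field; lra).
  assert (E2 : t / 4 * (sigma^2 / t^2) = sigma^2 / t / 4) by (field; lra).
  assert (0 <= t / 4 * (ln (t^2 + (1 - sigma)^2) - 2 * ln t) <= (1 - sigma)^2 / t / 4)
    by (rewrite <- E1; split; [apply Rmult_le_pos | apply Rmult_le_compat_l]; lra).
  assert (0 <= t / 4 * (ln (t^2 + sigma^2) - 2 * ln t) <= sigma^2 / t / 4)
    by (rewrite <- E2; split; [apply Rmult_le_pos | apply Rmult_le_compat_l]; lra).
  replace (((1 - sigma)^2 + sigma^2) / (2 * t)) with (((1 - sigma)^2 / t + sigma^2 / t) / 2)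
    by (field; lra).
  apply Rabs_le. split; lra.
Qed.

Lemma ln_mod_lim_sub_bound (Lz Lw : R) :
  is_lim_seq (ln_mod_seq t sigma) Lz -> is_lim_seq (ln_mod_seq t (1 - sigma)) Lw ->
  Rabs ((Lw - Lz) - ((sigma - 1/2) * ln 2
                     + (log_sq_prim t (- sigma) - log_sq_prim t (sigma - 1)) / 4))
  <= (3 / t^2 + PI / (2 * t)) / 6.
Proof.
  intros Hz Hw.
  apply (Rabs_lim_seq_le (fun n => ln_mod_seq t (1 - sigma) n - ln_mod_seq t sigma n)
           _ _ _ ((t^2 + 17) / 8)).
  { apply (is_lim_seq_minus' _ _ Lw Lz); assumption. }
  intros n Hn. assert (Hx : 1 <= INR n) by (apply (le_INR 1); lia).
  set (G c := sum_f_R0 (fun k => midpoint_err (log_sq_prim t) (log_sq t) (c + 2 * INR k)) n).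
  assert (Gz := grid_sum_bound_ge_neg1 t t_pos _ (1/3) sigma ltac:(lra) ltac:(lra)
                  (midpoint_err_log_sq_dominated t t_pos) n).
  assert (Gw := grid_sum_bound_ge_1 t t_pos _ (1/3) (1 - sigma) ltac:(lra) ltac:(lra)
                  (midpoint_err_log_sq_dominated t t_pos) n).
  change (Rabs (G sigma) <= 1/3 * (2 / t^2 + PI / (4 * t))) in Gz.
  change (Rabs (G (1 - sigma)) <= 1/3 * (/ t^2 + PI / (4 * t))) in Gw.
  assert (T := log_sq_prim_tail_bound (INR n) Hx).
  assert (E : forall c, sum_f_R0 (fun k => log_sq t (c + 2 * INR k) / 2 - ln 2) n
                 = ((log_sq_prim t (c + 2 * INR n + 1) - log_sq_prim t (c - 1)) / 2 + G c) / 2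
                   - INR (S n) * ln 2).
  { intros c. rewrite (sum_f_R0_affine (fun k => log_sq t (c + 2 * INR k)) _ (1/2) (- ln 2))
      by (intros k; field).
    rewrite (sum_midpoint_decomposition (log_sq_prim t)). unfold G. field. }
  unfold ln_mod_seq, gauss_log_mod. rewrite !E.
  replace (1 - sigma - 1) with (- sigma) by ring.
  replace (_ - _ - _) with
    (((1/2 - sigma) * ln (INR n)
      + (log_sq_prim t (sigma + 2 * INR n + 1) - log_sq_prim t (1 - sigma + 2 * INR n + 1)) / 4
      - (sigma - 1/2) * ln 2) + (G sigma - G (1 - sigma)) / 2) by field.
  eapply Rle_trans; [apply Rabs_triang|].
  assert (Rabs ((G sigma - G (1 - sigma)) / 2) <= (3 / t^2 + PI / (2 * t)) / 6).
  { unfold Rdiv at 1. rewrite Rabs_mult, (Rabs_pos_eq (/ 2)) by lra.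
    assert (Rabs (G sigma - G (1 - sigma)) <= Rabs (G sigma) + Rabs (G (1 - sigma))).
    { unfold Rminus. eapply Rle_trans; [apply Rabs_triang|]. rewrite Rabs_Ropp. lra. }
    replace ((3 / t^2 + PI / (2 * t)) / 6)
      with ((1/3 * (2 / t^2 + PI / (4 * t)) + 1/3 * (/ t^2 + PI / (4 * t))) * / 2)
      by (field; lra).
    apply Rmult_le_compat_r; lra. }
  replace ((t^2 + 17) / (8 * INR n)) with ((t^2 + 17) / 8 / INR n) in T by (field; lra).
  lra.
Qed.

Lemma arg_lim_add_bound (Lz Lw : R) :
  is_lim_seq (arg_seq t sigma) Lz -> is_lim_seq (arg_seq t (1 - sigma)) Lw ->
  Rabs (- (Lw + Lz) - (PI / 4 + t + t * ln 2
                       + (atan_div_prim t (sigma - 1) + atan_div_prim t (- sigma)) / 2))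
  <= (3 / t^2 + PI / (2 * t)) / 6.
Proof.
  intros Hz Hw.
  apply (Rabs_lim_seq_le (fun n => - (arg_seq t (1 - sigma) n + arg_seq t sigma n))
           _ _ _ (t^3 / 12 + t * (t^2 + 17) / 8)).
  { apply (is_lim_seq_opp _ (Lw + Lz)), (is_lim_seq_plus' _ _ Lw Lz); assumption. }
  intros n Hn. assert (Hx : 1 <= INR n) by (apply (le_INR 1); lia).
  set (G c := sum_f_R0 (fun k => midpoint_err (atan_div_prim t) (atan_div t) (c + 2 * INR k)) n).
  assert (Gz := grid_sum_bound_ge_neg1 t t_pos _ (1/6) sigma ltac:(lra) ltac:(lra)
                  (midpoint_err_atan_div_dominated t t_pos) n).
  assert (Gw := grid_sum_bound_ge_1 t t_pos _ (1/6) (1 - sigma) ltac:(lra) ltac:(lra)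
                  (midpoint_err_atan_div_dominated t t_pos) n).
  change (Rabs (G sigma) <= 1/6 * (2 / t^2 + PI / (4 * t))) in Gz.
  change (Rabs (G (1 - sigma)) <= 1/6 * (/ t^2 + PI / (4 * t))) in Gw.
  assert (T := atan_div_prim_tail_bound (INR n) Hx).
  assert (E : forall c, sum_f_R0 (fun k => PI / 2 - atan_div t (c + 2 * INR k)) n
                 = - ((atan_div_prim t (c + 2 * INR n + 1) - atan_div_prim t (c - 1)) / 2 + G c)
                   + (INR n + 1) * (PI / 2)).
  { intros c. rewrite (sum_f_R0_affine (fun k => atan_div t (c + 2 * INR k)) _ (-1) (PI / 2))
      by (intros k; ring).
    rewrite (sum_midpoint_decomposition (atan_div_prim t)), S_INR. unfold G. ring. }
  unfold arg_seq, gauss_arg. rewrite !E.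
  replace (1 - sigma - 1) with (- sigma) by ring.
  match goal with |- Rabs ?e <= _ => replace e with
    ((- t * ln (INR n) + PI * (INR n + 1)
      - (atan_div_prim t (sigma + 2 * INR n + 1) + atan_div_prim t (1 - sigma + 2 * INR n + 1)) / 2
      - (PI / 4 + t + t * ln 2)) + - (G sigma + G (1 - sigma))) by field end.
  eapply Rle_trans; [apply Rabs_triang|]. rewrite Rabs_Ropp.
  assert (Rabs (G sigma + G (1 - sigma)) <= (3 / t^2 + PI / (2 * t)) / 6).
  { eapply Rle_trans; [apply Rabs_triang|].
    replace ((3 / t^2 + PI / (2 * t)) / 6)
      with (1/6 * (2 / t^2 + PI / (4 * t)) + 1/6 * (/ t^2 + PI / (4 * t))) by (field; lra).
    lra. }
  lra.
Qed.

End Stirling.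

Definition mod_err_const (sigma : R) : R :=
  (3 + PI / 2) / 6 + ((1 - sigma)^3 + (- sigma)^3) / 6 + (1 - 2 * sigma) / 4.
Definition arg_err_const (sigma : R) : R :=
  (3 + PI / 2) / 6 + ((1 - sigma)^2 + sigma^2) / 2.

Lemma Cmod_le_of_Rabs_le (a b A B : R) : 0 <= A -> 3/4 * A <= B ->
  Rabs a <= A -> Rabs b <= B -> Cmod (a, b) <= B + A / 2.
Proof.
  intros HA HAB Ha Hb. unfold Cmod; simpl.
  assert (a^2 <= A^2) by (rewrite <- pow2_abs; assert (0 <= Rabs a) by apply Rabs_pos; nra).
  assert (b^2 <= B^2) by (rewrite <- pow2_abs; assert (0 <= Rabs b) by apply Rabs_pos; nra).
  rewrite <- (sqrt_pow2 (B + A / 2)) by lra. apply sqrt_le_1_alt. nra.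
Qed.

Lemma Cmod_error_le sigma t a b : -1/2 <= sigma < 0 -> 1 <= t ->
  Rabs a <= mod_err_const sigma / t -> Rabs b <= arg_err_const sigma / t ->
  Cmod ((1/2 - sigma + a, PI / 4 + b) : C)
  <= PI / 4 + (1 - 2 * sigma) / 2 + (18 * sigma^2 - 18 * sigma + 19) / (12 * t).
Proof.
  intros Hs Ht Ha Hb.
  assert (HPI : 0 < PI <= 4) by (split; [apply PI_RGT_0 | apply PI_4]).
  set (A := mod_err_const sigma) in *. set (B := arg_err_const sigma) in *.
  set (c := (18 * sigma^2 - 18 * sigma + 19) / 12). set (Q := B + A / 2).
  unfold Rdiv in Ha, Hb. set (r := / t) in *.
  assert (Hr : 0 < r <= 1)
    by (split; [apply Rinv_0_lt_compat; lra | rewrite <- Rinv_1; apply Rinv_le_contravar; lra]).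
  assert (HA : 0 <= A) by (unfold A, mod_err_const; nra).
  assert (HAB : 3/4 * A <= B) by (unfold A, B, mod_err_const, arg_err_const; nra).
  assert (Herr : Cmod (a, b) <= Q * r).
  { replace (Q * r) with (B * r + A * r / 2) by (unfold Q; field).
    apply Cmod_le_of_Rabs_le; nra. }
  set (p := Cmod (1/2 - sigma, PI / 4)).
  assert (Hp : p^2 = (1/2 - sigma)^2 + (PI / 4)^2)
    by (unfold p, Cmod; cbn [fst snd]; rewrite pow2_sqrt; [ring | nra]).
  assert (0 <= p) by apply Cmod_ge_0.
  assert (Hpuv : p <= 1/2 - sigma + PI / 4) by (apply le_of_pow2_le; nra).
  (* This is where the constant [c] comes from. *)
  assert (Hpc : p <= 1/2 - sigma + PI / 4 + c - Q).
  { assert (1/2 - sigma + PI / 4 + c - Q = 5/8 + PI / 8 - sigma + sigma^2 / 4 + sigma^3 / 6)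
      by (unfold c, Q, A, B, mod_err_const, arg_err_const; field).
    assert (0 <= sigma^2 * (1/4 + sigma / 6)) by (apply Rmult_le_pos; nra).
    apply le_of_pow2_le; nra. }
  replace ((1/2 - sigma + a, PI / 4 + b) : C) with (Cplus (1/2 - sigma, PI / 4) (a, b))
    by (unfold Cplus; simpl; reflexivity).
  eapply Rle_trans; [apply Cmod_triangle|]. fold p.
  replace ((18 * sigma^2 - 18 * sigma + 19) / (12 * t)) with (c * r) by (unfold c, r; field; lra).
  replace ((1 - 2 * sigma) / 2) with (1/2 - sigma) by field.
  assert (0 <= c) by (unfold c; nra).
  destruct (Rle_lt_dec Q c).
  - assert (Q * r <= c * r) by (apply Rmult_le_compat_r; lra). lra.
  - assert ((Q - c) * r <= Q - c) by nra. lra.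
Qed.

Section GammaRatio.

Variables (t sigma : R).
Hypothesis t_ge_1 : 1 <= t.
Hypothesis sigma_range : -1/2 <= sigma < 0.

Let t_pos : 0 < t.
Proof. lra. Qed.

Let grid_err_le : (3 / t^2 + PI / (2 * t)) / 6 <= (3 + PI / 2) / 6 / t.
Proof.
  assert (/ t^2 <= / t) by (apply Rinv_le_contravar; nra).
  replace ((3 / t^2 + PI / (2 * t)) / 6) with (/ t^2 / 2 + PI / 12 * / t) by (field; lra).
  replace ((3 + PI / 2) / 6 / t) with (/ t / 2 + PI / 12 * / t) by (field; lra). lra.
Qed.

Lemma ln_abs_ratio_estimate (Lz Lw : R) :
  is_lim_seq (ln_mod_seq t sigma) Lz -> is_lim_seq (ln_mod_seq t (1 - sigma)) Lw ->
  Rabs ((Lw - Lz) - ((1 - sigma) / 4 * ln ((sigma^2 + t^2) / 4)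
                     - sigma / 4 * ln (((1 - sigma)^2 + t^2) / 4)))
  <= mod_err_const sigma / t.
Proof.
  intros Hz Hw.
  assert (H1 := ln_mod_lim_sub_bound t sigma t_pos sigma_range Lz Lw Hz Hw).
  assert (H2 := ln_mod_main_term_bound t sigma t_pos sigma_range).
  eapply Rle_trans; [apply (Rabs_sub_le_via _ _ _ _ _ H1 H2)|].
  assert (0 <= (1 - sigma)^3 + (- sigma)^3) by nra.
  assert ((((1 - sigma)^3 + (- sigma)^3) / 6 + (1 - 2 * sigma) / 4) / t^2
          <= (((1 - sigma)^3 + (- sigma)^3) / 6 + (1 - 2 * sigma) / 4) / t).
  { unfold Rdiv at 3 4. apply Rmult_le_compat_l; [lra|]. apply Rinv_le_contravar; nra. }
  unfold mod_err_const.
  replace (((3 + PI / 2) / 6 + ((1 - sigma)^3 + (- sigma)^3) / 6 + (1 - 2 * sigma) / 4) / t)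
    with ((3 + PI / 2) / 6 / t + (((1 - sigma)^3 + (- sigma)^3) / 6 + (1 - 2 * sigma) / 4) / t)
    by (field; lra).
  pose proof grid_err_le. lra.
Qed.

Lemma arg_ratio_estimate (Lz Lw : R) :
  is_lim_seq (arg_seq t sigma) Lz -> is_lim_seq (arg_seq t (1 - sigma)) Lw ->
  Rabs (- (Lw + Lz) - (PI / 4 + t + t * ln 2 - t * ln t)) <= arg_err_const sigma / t.
Proof.
  intros Hz Hw.
  assert (H1 := arg_lim_add_bound t sigma t_pos sigma_range Lz Lw Hz Hw).
  assert (H2 := arg_main_term_bound t sigma t_pos sigma_range).
  apply Rle_trans with ((3 / t^2 + PI / (2 * t)) / 6 + ((1 - sigma)^2 + sigma^2) / (2 * t)).
  - apply (Rabs_sub_le_via _ _ _ _ _ H1).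
    replace (_ - _)
      with ((atan_div_prim t (sigma - 1) + atan_div_prim t (- sigma)) / 2 + t * ln t) by ring.
    exact H2.
  - unfold arg_err_const.
    replace (((3 + PI / 2) / 6 + ((1 - sigma)^2 + sigma^2) / 2) / t)
      with ((3 + PI / 2) / 6 / t + ((1 - sigma)^2 + sigma^2) / (2 * t)) by (field; lra).
    pose proof grid_err_le. lra.
Qed.

Lemma gamma_ratio_error_bound (Lz1 Lz2 Lw1 Lw2 : R) :
  is_lim_seq (ln_mod_seq t sigma) Lz1 -> is_lim_seq (arg_seq t sigma) Lz2 ->
  is_lim_seq (ln_mod_seq t (1 - sigma)) Lw1 -> is_lim_seq (arg_seq t (1 - sigma)) Lw2 ->
  Cmod (((sigma - 1/2) * ln PI + Lw1 - Lz1
         - ln (Rpower (((1 - sigma)^2 + t^2) / 4) (- sigma / 4)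
               * Rpower ((sigma^2 + t^2) / 4) ((1 - sigma) / 4) * Rpower PI (sigma - 1/2))
         - (sigma - 1/2),
         t * ln PI - Lw2 - Lz2 - t * (- ln t + ln (2 * PI) + 1)) : C)
  <= PI / 4 + (1 - 2 * sigma) / 2 + (18 * sigma^2 - 18 * sigma + 19) / (12 * t).
Proof.
  intros Hz1 Hz2 Hw1 Hw2.
  assert (Hmod := ln_abs_ratio_estimate Lz1 Lw1 Hz1 Hw1).
  assert (Harg := arg_ratio_estimate Lz2 Lw2 Hz2 Hw2).
  assert (HPI := PI_RGT_0).
  rewrite !ln_mult by (unfold Rpower; try apply Rmult_lt_0_compat; apply exp_pos).
  rewrite !ln_Rpower, ln_mult by lra.
  match type of Hmod with Rabs ?a <= _ => match type of Harg with Rabs ?b <= _ =>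
    replace (_, _) with ((1/2 - sigma + a, PI / 4 + b) : C) by (f_equal; field) end end.
  now apply Cmod_error_le.
Qed.

End GammaRatio.

Lemma polar_exp_rescale x y r c d : 0 < r ->
  polar (exp x) y
  = Cmult (RtoC r) (Cexp (Cplus (Cplus (RtoC c) (Cmult Ci (RtoC d))) ((x - ln r - c, y - d) : C))).
Proof.
  intros Hr.
  replace (Cplus (Cplus (RtoC c) (Cmult Ci (RtoC d))) ((x - ln r - c, y - d) : C))
    with ((x - ln r, y) : C) by (unfold Cplus, Cmult, Ci, RtoC; simpl; f_equal; ring).
  rewrite Cexp_polar, RtoC_polar, polar_mult. f_equal; [|ring].
  unfold Rminus. rewrite exp_plus, exp_Ropp, exp_ln by exact Hr. field. lra.
Qed.

Lemma reflection_ratio_polar (sigma t Lz1 Lz2 Lw1 Lw2 : R) : 0 < t ->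
  is_lim_seq (ln_mod_seq t sigma) Lz1 -> is_lim_seq (arg_seq t sigma) Lz2 ->
  is_lim_seq (ln_mod_seq t (1 - sigma)) Lw1 -> is_lim_seq (arg_seq t (1 - sigma)) Lw2 ->
  Cmult (Cexp (Cmult (Cminus (sigma, t) (RtoC (1/2))) (RtoC (ln PI))))
        (Cdiv (CGamma (Cdiv (Cminus (RtoC 1) (sigma, t)) (RtoC 2)))
              (CGamma (Cdiv (sigma, t) (RtoC 2))))
  = polar (exp ((sigma - 1/2) * ln PI + Lw1 - Lz1)) (t * ln PI - Lw2 - Lz2).
Proof.
  intros Ht Hz1 Hz2 Hw1 Hw2.
  replace (Cdiv (sigma, t) (RtoC 2)) with ((sigma / 2, t / 2) : C)
    by (unfold Cdiv, Cinv, Cmult, RtoC; simpl; f_equal; field).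
  replace (Cdiv (Cminus (RtoC 1) (sigma, t)) (RtoC 2)) with (((1 - sigma) / 2, - (t / 2)) : C)
    by (unfold Cdiv, Cinv, Cmult, Cminus, Cplus, Copp, RtoC; simpl; f_equal; field).
  replace (Cmult (Cminus (sigma, t) (RtoC (1/2))) (RtoC (ln PI)))
    with (((sigma - 1/2) * ln PI, t * ln PI) : C)
    by (unfold Cmult, Cminus, Cplus, Copp, RtoC; simpl; f_equal; ring).
  rewrite Cexp_polar, (CGamma_half t Ht sigma Lz1 Lz2 Hz1 Hz2),
    (CGamma_half_conj t Ht (1 - sigma) Lw1 Lw2 Hw1 Hw2), polar_div, polar_mult by apply exp_pos.
  f_equal; [|ring].
  unfold Rminus. rewrite !exp_plus, exp_Ropp. field. apply Rgt_not_eq, exp_pos.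
Qed.

Theorem lemma3p10 (sigma t : R) :
  -1/2 <= sigma < 0 -> 1 <= t ->
  let s : C := (sigma, t) in
  exists E : C,
    Cmod E <= PI / 4 + (1 - 2 * sigma) / 2
              + (18 * sigma ^ 2 - 18 * sigma + 19) / (12 * t) /\
    Cmult (Cexp (Cmult (Cminus s (RtoC (1/2))) (RtoC (ln PI))))
          (Cdiv (CGamma (Cdiv (Cminus (RtoC 1) s) (RtoC 2)))
                (CGamma (Cdiv s (RtoC 2))))
    = Cmult (RtoC (Rpower (((1 - sigma) ^ 2 + t ^ 2) / 4) (- sigma / 4)
                   * Rpower ((sigma ^ 2 + t ^ 2) / 4) ((1 - sigma) / 4)
                   * Rpower PI (sigma - 1/2)))
            (Cexp (Cplus (Cplus (RtoC (sigma - 1/2))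
                                (Cmult Ci (RtoC (t * (- ln t + ln (2 * PI) + 1)))))
                         E)).
Proof.
  intros Hsigma Ht s. unfold s.
  assert (Ht0 : 0 < t) by lra.
  destruct (ln_mod_seq_cvg t Ht0 sigma ltac:(lra)) as [Lz1 Hz1].
  destruct (arg_seq_cvg t Ht0 sigma ltac:(lra)) as [Lz2 Hz2].
  destruct (ln_mod_seq_cvg t Ht0 (1 - sigma) ltac:(lra)) as [Lw1 Hw1].
  destruct (arg_seq_cvg t Ht0 (1 - sigma) ltac:(lra)) as [Lw2 Hw2].
  rewrite (reflection_ratio_polar sigma t Lz1 Lz2 Lw1 Lw2 Ht0 Hz1 Hz2 Hw1 Hw2).
  set (r := Rpower (((1 - sigma) ^ 2 + t ^ 2) / 4) (- sigma / 4)
            * Rpower ((sigma ^ 2 + t ^ 2) / 4) ((1 - sigma) / 4) * Rpower PI (sigma - 1/2)).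
  rewrite (polar_exp_rescale _ _ r (sigma - 1/2) (t * (- ln t + ln (2 * PI) + 1)))
    by (unfold r, Rpower; repeat apply Rmult_lt_0_compat; apply exp_pos).
  eexists; split; [|reflexivity].
  now apply gamma_ratio_error_bound.
Qed.
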